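(* Let $I,S$ be numerical semigroups such that $I$ is irreducible, $S\subseteq I$ and $\mathrm{F}(S)=\mathrm{F}(I)$. Then $S=I\setminus A$ for some $A\subseteq\{x\in I\mid \frac{\mathrm{F}(I)}{2}<x<\mathrm{F}(I)\}$ if and only if $\Delta(S)=\Delta(I)$.
   Context: A numerical semigroup is a subset $S\subseteq\mathbb{N}$ closed under addition with $0\in S$ and $\mathbb{N}\setminus S$ finite; $\mathrm{F}(S)=\max(\mathbb{Z}\setminus S)$. A numerical semigroup is irreducible if it is not the intersection of two numerical semigroups properly containing it. $\Delta(S)=\{s\in S\mid s<\frac{\mathrm{F}(S)}{2}\}$. *)

From Stdlib Require Import ZArith.
Open Scope Z_scope.

Definition numerical_semigroup (S : nat -> Prop) : Prop :=
  S 0%nat /\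
  (forall a b, S a -> S b -> S (a + b)%nat) /\
  (exists N : nat, forall n : nat, (N <= n)%nat -> S n).

Definition inZ (S : nat -> Prop) (z : Z) : Prop := 0 <= z /\ S (Z.to_nat z).

Definition frobenius (S : nat -> Prop) (f : Z) : Prop :=
  ~ inZ S f /\ forall z : Z, f < z -> inZ S z.

Definition subset (S T : nat -> Prop) : Prop := forall x, S x -> T x.
Definition proper_subset (S T : nat -> Prop) : Prop :=
  subset S T /\ exists x, T x /\ ~ S x.

Definition irreducible (S : nat -> Prop) : Prop :=
  numerical_semigroup S /\
  ~ (exists T1 T2 : nat -> Prop,
        numerical_semigroup T1 /\ numerical_semigroup T2 /\
        proper_subset S T1 /\ proper_subset S T2 /\
        (forall x, S x <-> (T1 x /\ T2 x))).

Definition Delta (S : nat -> Prop) (f : Z) (s : nat) : Prop :=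
  S s /\ 2 * Z.of_nat s < f.

(* An element of I lying above F/2 is not in Delta(I), so deleting such elements leaves
   Delta unchanged.  Conversely, if Delta(S) = Delta(I), an element x of I \ S satisfies
   x < F, since S contains everything above its Frobenius number F, and F/2 < x, since
   x is not in Delta(S) = Delta(I) and 2x = F is impossible: I is closed under addition
   and does not contain F. *)

From Stdlib Require Import ZArith Lia Classical.
Open Scope Z_scope.

Lemma frobenius_not_mem (S : nat -> Prop) (f : Z) (x : nat) :
  frobenius S f -> S x -> Z.of_nat x <> f.
Proof.
  intros [Hf _] Sx Hxf; apply Hf; split; [lia|].
  now rewrite <- Hxf, Nat2Z.id.
Qed.

Lemma frobenius_lt_mem (S : nat -> Prop) (f : Z) (x : nat) :
  frobenius S f -> f < Z.of_nat x -> S x.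
Proof.
  intros [_ Hgt] Hlt; destruct (Hgt _ Hlt) as [_ Sx].
  now rewrite Nat2Z.id in Sx.
Qed.

Lemma frobenius_double_neq (S : nat -> Prop) (f : Z) (x : nat) :
  (forall a b, S a -> S b -> S (a + b)%nat) ->
  frobenius S f -> S x -> 2 * Z.of_nat x <> f.
Proof.
  intros Hadd Hf Sx Hxf.
  apply (frobenius_not_mem S f (x + x) Hf (Hadd x x Sx Sx)); lia.
Qed.

Lemma Delta_remove_above_half (I S A : nat -> Prop) (f : Z) :
  (forall x, A x -> f < 2 * Z.of_nat x) ->
  (forall x, S x <-> (I x /\ ~ A x)) ->
  forall s, Delta S f s <-> Delta I f s.
Proof.
  intros HA HSA s; unfold Delta; rewrite HSA.
  split; [tauto|].
  intros [Is Hlt]; repeat split; auto.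
  intros As; specialize (HA s As); lia.
Qed.

Lemma Delta_eq_gap_bounds (I S : nat -> Prop) (f : Z) (x : nat) :
  (forall a b, I a -> I b -> I (a + b)%nat) ->
  frobenius I f -> frobenius S f ->
  (forall s, Delta S f s <-> Delta I f s) ->
  I x -> ~ S x -> f < 2 * Z.of_nat x /\ Z.of_nat x < f.
Proof.
  intros Hadd FI FS HD Ix NSx.
  assert (x_not_above_f : ~ f < Z.of_nat x)
    by (intro Hlt; exact (NSx (frobenius_lt_mem S f x FS Hlt))).
  assert (x_above_half : ~ 2 * Z.of_nat x < f)
    by (intro Hlt; apply NSx, (proj2 (HD x)); split; assumption).
  pose proof (frobenius_not_mem I f x FI Ix) as x_neq_f.
  pose proof (frobenius_double_neq I f x Hadd FI Ix) as double_x_neq_f.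
  lia.
Qed.

Theorem proposition25 (I S : nat -> Prop) (f : Z) :
  numerical_semigroup I -> numerical_semigroup S ->
  irreducible I -> subset S I ->
  frobenius I f -> frobenius S f ->
  ((exists A : nat -> Prop,
       (forall x, A x -> I x /\ f < 2 * Z.of_nat x /\ Z.of_nat x < f) /\
       (forall x, S x <-> (I x /\ ~ A x)))
   <-> (forall s, Delta S f s <-> Delta I f s)).
Proof.
  intros [_ [Hadd _]] _ _ Hsub FI FS; split.
  - intros [A [HA HSA]].
    apply (Delta_remove_above_half I S A); [|exact HSA].
    intros x Ax; apply (HA x Ax).
  - intros HD; exists (fun x => I x /\ ~ S x); split.
    + intros x [Ix NSx]; split; [exact Ix|].
      exact (Delta_eq_gap_bounds I S f x Hadd FI FS HD Ix NSx).
    + intros x; split.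
      * intros Sx; split; [exact (Hsub x Sx)|tauto].
      * intros [Ix Hn]; apply NNPP; intros NSx; exact (Hn (conj Ix NSx)).
Qed.
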